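(* Consider Model 2 (the risk-neutral insider model) with $N\ge1$ trading periods, as described in the context. A subgame perfect equilibrium exists. In this equilibrium there are real numbers $\beta_n,\lambda_n,\alpha_n,\delta_n,\Sigma_n$ such that for $n=1,\dots,N$: $x_n=\beta_n(v-p_{n-1})$, $p_n-p_{n-1}=\lambda_n y_n$, $\Sigma_n=\operatorname{Var}(v\mid y_1,\dots,y_n)$, and $$E\Big(\sum_{k=n}^N\pi_k\,\Big|\,p_1,\dots,p_{n-1},v\Big)=\alpha_{n-1}(v-p_{n-1})^2+\delta_{n-1},$$ where $$\delta_n=a_n\sigma_u\Delta t_N^{1/2}\Sigma_n^{1/2},\quad \alpha_n=b_n\sigma_u\Delta t_N^{1/2}\Sigma_n^{-1/2}\quad(n=0,\dots,N-1),\qquad \beta_n=c_n\sigma_u\Delta t_N^{1/2}\Sigma_{n-1}^{-1/2}\quad(n=1,\dots,N),$$ and the sequences $\{a_n\},\{b_n\},\{c_n\}$, with terminal values $a_{N-1}=0$, $b_{N-1}=\tfrac12$, $c_N=1$, satisfy for $n=1,\dots,N-1$ $$a_{n-1}=a_n\Big(\frac{1}{c_n^2+1}\Big)^{1/2}+b_n\Big(\frac{1}{c_n^2+1}\Big)^{3/2}c_n^2,\qquad b_{n-1}=b_n\Big(\frac{1}{c_n^2+1}\Big)^{3/2}+\frac{c_n}{c_n^2+1},\qquad a_n+b_n=\frac{1-c_n^2}{c_n(1+c_n^2)^{1/2}},$$ with $c_n>0$ for $n=1,\dots,N$.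
   Context: Model. Fix an integer $N\ge1$ and put $\Delta t_N=1/N$. A risky asset has liquidation value $v\sim N(p_0,\Sigma_0)$ with $\Sigma_0>0$. In each period $n=1,\dots,N$ noise traders submit $u_n\sim N(0,\sigma_u^2\Delta t_N)$ ($\sigma_u>0$), i.i.d. and independent of $v$. The insider knows $v$ and submits $x_n=\beta_n(v-p_{n-1})$ with $\beta_n\in\mathbb R$. The market maker observes $y_n=x_n+u_n$ and sets $p_n=E[v\mid y_1,\dots,y_n]$. The insider's profit in period $n$ is $\pi_n=x_n(v-p_n)$ and $\Sigma_n=\operatorname{Var}(v\mid y_1,\dots,y_n)$. For such strategies, with $\lambda_n=\beta_n\Sigma_{n-1}/(\beta_n^2\Sigma_{n-1}+\sigma_u^2\Delta t_N)$ one has $p_n-p_{n-1}=\lambda_ny_n$, $\Sigma_n=\Sigma_{n-1}\sigma_u^2\Delta t_N/(\beta_n^2\Sigma_{n-1}+\sigma_u^2\Delta t_N)$, and $E(\sum_{k=n}^N\pi_k\mid p_1,\dots,p_{n-1},v)=\alpha_{n-1}(v-p_{n-1})^2+\delta_{n-1}$ with $\alpha_N=\delta_N=0$, $\alpha_{n-1}=\alpha_n(1-\lambda_n\beta_n)^2+\beta_n(1-\lambda_n\beta_n)$, $\delta_{n-1}=\delta_n+\alpha_n\lambda_n^2\sigma_u^2\Delta t_N$. Equilibrium. An insider strategy specifies, for each period $n$ and each value $\Sigma_{n-1}>0$ of the current conditional variance, an intensity $\beta_n$. Given the strategy for periods $n+1,\dots,N$, each choice of $\beta_n$ determines (with later intensities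 given by the strategy applied to the resulting variances) $\alpha_{n-1},\delta_{n-1}$ as functions of $\beta_n$ and $\Sigma_{n-1}$. A subgame perfect equilibrium of Model 2 is a strategy such that for every $n$ and every $\Sigma_{n-1}>0$ the prescribed $\beta_n$ maximizes over $\beta_n\in\mathbb R$ the ex ante expected profit $E(\sum_{k=n}^N\pi_k)=\alpha_{n-1}\Sigma_{n-1}+\delta_{n-1}$, with the market maker pricing efficiently given this strategy. *)

From Stdlib Require Import Reals Lra Lia.
Open Scope R_scope.

(* Reduced (coefficient) form of Model 2, as given in the context.
   sd stands for sigma_u^2 * Delta t_N.
   A strategy  s : nat -> R -> R  gives, for period n and current conditional
   variance Sigma_{n-1} > 0, the intensity beta_n = s n Sigma_{n-1}. *)

Definition lam_of (sd b Sig : R) : R := b * Sig / (b ^ 2 * Sig + sd).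

Definition sig_next (sd b Sig : R) : R := Sig * sd / (b ^ 2 * Sig + sd).

(* Backward step: from (alpha_n, delta_n) to (alpha_{n-1}, delta_{n-1}). *)
Definition back_step (sd b Sig : R) (ad : R * R) : R * R :=
  let l := lam_of sd b Sig in
  (fst ad * (1 - l * b) ^ 2 + b * (1 - l * b), snd ad + fst ad * l ^ 2 * sd).

(* cont s sd n m Sig = (alpha_{n-1}, delta_{n-1}) when play starts at period n
   with Sigma_{n-1} = Sig, m periods (n, ..., n+m-1) remain, and s is used
   throughout.  With m = N - n + 1 this is the game up to period N. *)
Fixpoint cont (s : nat -> R -> R) (sd : R) (n m : nat) (Sig : R) : R * R :=
  match m with
  | O => (0, 0)
  | S m' =>
      let b := s n Sig in
      back_step sd b Sig (cont s sd (S n) m' (sig_next sd b Sig))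
  end.

(* (alpha_{n-1}, delta_{n-1}) as functions of the choice b = beta_n at period n
   (with Sigma_{n-1} = Sig), later periods n+1..N following s. *)
Definition dev_coef (N : nat) (s : nat -> R -> R) (sd : R) (n : nat) (b Sig : R)
  : R * R :=
  back_step sd b Sig (cont s sd (S n) (N - n) (sig_next sd b Sig)).

(* Ex ante expected profit from period n on: alpha_{n-1} Sigma_{n-1} + delta_{n-1}. *)
Definition exp_profit (N : nat) (s : nat -> R -> R) (sd : R) (n : nat) (b Sig : R) : R :=
  fst (dev_coef N s sd n b Sig) * Sig + snd (dev_coef N s sd n b Sig).

Definition SPE (N : nat) (sd : R) (s : nat -> R -> R) : Prop :=
  forall n : nat, (1 <= n <= N)%nat ->
  forall Sig : R, 0 < Sig ->
  forall b : R, exp_profit N s sd n b Sig <= exp_profit N s sd n (s n Sig) Sig.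

Fixpoint sig_path (s : nat -> R -> R) (sd Sig0 : R) (n : nat) : R :=
  match n with
  | O => Sig0
  | S k => sig_next sd (s (S k) (sig_path s sd Sig0 k)) (sig_path s sd Sig0 k)
  end.

Definition beta_path (s : nat -> R -> R) (sd Sig0 : R) (n : nat) : R :=
  s n (sig_path s sd Sig0 (n - 1)).

Definition lambda_path (s : nat -> R -> R) (sd Sig0 : R) (n : nat) : R :=
  lam_of sd (beta_path s sd Sig0 n) (sig_path s sd Sig0 (n - 1)).

Definition alpha_path (N : nat) (s : nat -> R -> R) (sd Sig0 : R) (n : nat) : R :=
  fst (cont s sd (S n) (N - n) (sig_path s sd Sig0 n)).
Definition delta_path (N : nat) (s : nat -> R -> R) (sd Sig0 : R) (n : nat) : R :=
  snd (cont s sd (S n) (N - n) (sig_path s sd Sig0 n)).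

From Stdlib Require Import Reals Lra Lia Psatz.
Open Scope R_scope.

(* Write r = sigma_u sqrt(dt), so that sigma_u^2 dt = r^2, and look for a strategy
   beta = q r / sqrt(Sigma) whose continuation coefficients have the form
   alpha = B r / sqrt(Sigma), delta = A r sqrt(Sigma).  One backward step keeps
   this form, and the ex ante profit becomes r sqrt(Sigma) (S T + W T) with
   S = A + B, T = 1 / sqrt(1 + q^2), W = q / sqrt(1 + q^2).  On the unit circle
   this is maximal at W = w, where S w = 1 - 2 w^2; hence the optimal
   q = c = w / sqrt(1 - w^2) depends only on S, and backward induction on (A, B)
   yields a, b, c. *)

Definition opt_sin (S : R) : R := (- S + sqrt (S ^ 2 + 8)) / 4.
Definition opt_cos (S : R) : R := sqrt (1 - opt_sin S ^ 2).
Definition opt_ratio (S : R) : R := opt_sin S / opt_cos S.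

Lemma opt_sin_cos_spec S : 0 <= S ->
  0 < opt_sin S /\ 0 < opt_cos S /\ opt_cos S ^ 2 + opt_sin S ^ 2 = 1 /\
  S * opt_sin S = 1 - 2 * opt_sin S ^ 2.
Proof.
intros HS.
assert (Hq0 := sqrt_pos (S ^ 2 + 8)).
assert (Hq2 : sqrt (S ^ 2 + 8) ^ 2 = S ^ 2 + 8) by (apply pow2_sqrt; nra).
assert (Hw0 : 0 < opt_sin S) by (unfold opt_sin; nra).
assert (Hw1 : opt_sin S < 1) by (unfold opt_sin; nra).
assert (Ht2 : opt_cos S ^ 2 = 1 - opt_sin S ^ 2) by (unfold opt_cos; apply pow2_sqrt; nra).
assert (Ht0 : 0 < opt_cos S) by (unfold opt_cos; apply sqrt_lt_R0; nra).
repeat split; try lra.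
unfold opt_sin; nra.
Qed.

Lemma opt_sin_cos_max S T W : 0 <= S -> 0 <= T -> T ^ 2 + W ^ 2 = 1 ->
  S * T + W * T <= S * opt_cos S + opt_sin S * opt_cos S.
Proof.
intros HS HT HTW.
destruct (opt_sin_cos_spec S HS) as (Hw & Ht & Htw & HSw).
set (w := opt_sin S) in *; set (t := opt_cos S) in *.
enough (Hpos : forall W, 0 <= W -> T ^ 2 + W ^ 2 = 1 -> S * T + W * T <= S * t + w * t).
{ destruct (Rle_lt_dec 0 W) as [HW | HW]; [now apply Hpos |].
  assert (S * T + (- W) * T <= S * t + w * t) by (apply Hpos; nra).
  nra. }
clear W HTW; intros W HW HTW.
(* Multiplied by w, the gap factors as (1 - (t T + w W)) (t + w^2 T + t w W), and
   the first factor is nonnegative by Cauchy-Schwarz. *)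
assert (Hgap : w * (S * t + w * t - S * T - W * T)
               = (1 - (t * T + w * W)) * (t + w ^ 2 * T + t * w * W)).
{ transitivity ((S * w) * (t - T) + w ^ 2 * t - w * W * T); [ring |].
  rewrite HSw.
  transitivity ((1 - (t * T + w * W)) * (t + w ^ 2 * T + t * w * W)
                + (w * T * W + T) * (t ^ 2 + w ^ 2 - 1)
                + t * w ^ 2 * (T ^ 2 + W ^ 2 - 1)); [ring |].
  rewrite Htw, HTW; ring. }
assert (Hcs : 0 <= 1 - (t * T + w * W)).
{ assert (0 <= (t - T) ^ 2 + (w - W) ^ 2)
    by (apply Rplus_le_le_0_compat; apply pow2_ge_0).
  nra. }
assert (0 <= t + w ^ 2 * T + t * w * W).
{ assert (0 <= w ^ 2 * T) by (apply Rmult_le_pos; [apply pow2_ge_0 | lra]).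
  assert (0 <= t * w * W) by (apply Rmult_le_pos; [nra | lra]).
  lra. }
nra.
Qed.

Lemma sig_next_pos sd b Sig : 0 < sd -> 0 < Sig -> 0 < sig_next sd b Sig.
Proof.
intros Hsd HSig; unfold sig_next.
apply Rdiv_lt_0_compat; [nra |].
assert (0 <= b ^ 2 * Sig) by (apply Rmult_le_pos; [apply pow2_ge_0 | lra]).
lra.
Qed.

Lemma sig_path_pos s sd Sig0 : 0 < sd -> 0 < Sig0 -> forall n, 0 < sig_path s sd Sig0 n.
Proof. intros Hsd H0 n; induction n; simpl; auto using sig_next_pos. Qed.

Lemma back_step_normalized r X q Y A B :
  0 < r -> 0 < X -> 0 < Y -> Y ^ 2 = 1 + q ^ 2 ->
  back_step (r ^ 2) (q * r / X) (X ^ 2)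
    (B * r / sqrt (sig_next (r ^ 2) (q * r / X) (X ^ 2)),
     A * r * sqrt (sig_next (r ^ 2) (q * r / X) (X ^ 2)))
  = (r / X * (B / Y ^ 3 + q / Y ^ 2), r * X * (A / Y + B * q ^ 2 / Y ^ 3)).
Proof.
intros Hr HX HY HY2.
set (Sig' := sig_next (r ^ 2) (q * r / X) (X ^ 2)).
assert (Hden : (q * r / X) ^ 2 * X ^ 2 + r ^ 2 = r ^ 2 * Y ^ 2)
  by (rewrite HY2; field; lra).
assert (Hsig : sqrt Sig' = X / Y).
{ unfold Sig', sig_next; rewrite Hden.
  replace (X ^ 2 * r ^ 2 / (r ^ 2 * Y ^ 2)) with ((X / Y) ^ 2) by (field; lra).
  apply sqrt_pow2, Rlt_le, Rdiv_lt_0_compat; lra. }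
assert (Hlam : lam_of (r ^ 2) (q * r / X) (X ^ 2) = q * X / (r * Y ^ 2))
  by (unfold lam_of; rewrite Hden; field; lra).
assert (Hres : 1 - lam_of (r ^ 2) (q * r / X) (X ^ 2) * (q * r / X) = 1 / Y ^ 2).
{ rewrite Hlam.
  replace (1 - q * X / (r * Y ^ 2) * (q * r / X)) with ((Y ^ 2 - q ^ 2) / Y ^ 2)
    by (field; lra).
  rewrite HY2; field; nra. }
rewrite Hsig; unfold back_step; cbn zeta; cbn [fst snd]; rewrite Hres, Hlam.
f_equal; field; lra.
Qed.

Lemma back_step_profit r X q A B : 0 < r -> 0 < X ->
  let Y := sqrt (1 + q ^ 2) in
  let Sig' := sig_next (r ^ 2) (q * r / X) (X ^ 2) in
  let ad := back_step (r ^ 2) (q * r / X) (X ^ 2) (B * r / sqrt Sig', A * r * sqrt Sig') in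
  fst ad * X ^ 2 + snd ad = r * X * ((A + B) * (1 / Y) + (q / Y) * (1 / Y)).
Proof.
intros Hr HX Y Sig' ad.
assert (HY : 0 < Y) by (apply sqrt_lt_R0; nra).
assert (HY2 : Y ^ 2 = 1 + q ^ 2) by (apply pow2_sqrt; nra).
unfold ad, Sig'; rewrite (back_step_normalized r X q Y A B); auto; cbn [fst snd].
transitivity (r * X * ((A + B) * (1 / Y) + (q / Y) * (1 / Y))
              + r * X * B * (1 + q ^ 2 - Y ^ 2) / Y ^ 3); [field; lra |].
rewrite HY2; field; lra.
Qed.

Lemma opt_ratio_norm S : 0 <= S ->
  sqrt (1 + opt_ratio S ^ 2) = 1 / opt_cos S /\
  sqrt (1 / (opt_ratio S ^ 2 + 1)) = opt_cos S.
Proof.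
intros HS; destruct (opt_sin_cos_spec S HS) as (Hw & Ht & Htw & _).
assert (Hc : opt_ratio S ^ 2 + 1 = (1 / opt_cos S) ^ 2).
{ unfold opt_ratio; transitivity ((opt_cos S ^ 2 + opt_sin S ^ 2) / opt_cos S ^ 2);
    [field; lra |].
  rewrite Htw; field; lra. }
split.
- rewrite Rplus_comm, Hc; apply sqrt_pow2, Rlt_le, Rdiv_lt_0_compat; lra.
- rewrite Hc; replace (1 / (1 / opt_cos S) ^ 2) with (opt_cos S ^ 2) by (field; lra).
  apply sqrt_pow2; lra.
Qed.

Definition coef_step (p : R * R) : R * R :=
  let S := fst p + snd p in
  (fst p * opt_cos S + snd p * opt_cos S * opt_sin S ^ 2,
   snd p * opt_cos S ^ 3 + opt_sin S * opt_cos S).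

(* [coefs m] is the pair (a, b) with m periods remaining: a_n = fst (coefs (N - n)). *)
Fixpoint coefs (m : nat) : R * R :=
  match m with O => (0, 0) | S m' => coef_step (coefs m') end.

Definition coef_sum (m : nat) : R := fst (coefs m) + snd (coefs m).

Lemma coefs_nonneg m : 0 <= fst (coefs m) /\ 0 <= snd (coefs m).
Proof.
induction m as [| m [HA HB]]; cbn [coefs fst snd]; [lra |].
unfold coef_step; cbn [fst snd].
destruct (opt_sin_cos_spec (fst (coefs m) + snd (coefs m))) as (Hw & Ht & _ & _); [lra |].
split.
- apply Rplus_le_le_0_compat; [nra |].
  apply Rmult_le_pos; [nra | apply pow2_ge_0].
- apply Rplus_le_le_0_compat; [| nra].
  apply Rmult_le_pos; [lra | apply pow_le; lra].
Qed.

Lemma coef_sum_nonneg m : 0 <= coef_sum m.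
Proof. unfold coef_sum; destruct (coefs_nonneg m); lra. Qed.

Lemma coef_step_recursion A B : 0 <= A -> 0 <= B ->
  let c := opt_ratio (A + B) in
  fst (coef_step (A, B)) = A * sqrt (1 / (c ^ 2 + 1)) + B * sqrt (1 / (c ^ 2 + 1)) ^ 3 * c ^ 2 /\
  snd (coef_step (A, B)) = B * sqrt (1 / (c ^ 2 + 1)) ^ 3 + c / (c ^ 2 + 1) /\
  A + B = (1 - c ^ 2) / (c * sqrt (1 + c ^ 2)).
Proof.
intros HA HB c.
destruct (opt_sin_cos_spec (A + B)) as (Hw & Ht & Htw & HSw); [lra |].
destruct (opt_ratio_norm (A + B)) as [Hn1 Hn2]; [lra |].
unfold c; rewrite Hn1, Hn2; unfold coef_step, opt_ratio; cbn [fst snd].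
set (w := opt_sin (A + B)) in *; set (t := opt_cos (A + B)) in *.
split; [| split].
- field; lra.
- replace ((w / t) ^ 2 + 1) with ((t ^ 2 + w ^ 2) / t ^ 2) by (field; lra).
  rewrite Htw; field; lra.
- replace (A + B) with ((1 - 2 * w ^ 2) / w) by (rewrite <- HSw; field; lra).
  replace (1 - 2 * w ^ 2) with (t ^ 2 - w ^ 2) by lra.
  field; lra.
Qed.

Lemma coefs_1 : coefs 1 = (0, 1 / 2).
Proof.
destruct (opt_sin_cos_spec 0) as (Hw & Ht & Htw & HSw); [lra |].
cbn [coefs]; unfold coef_step; cbn [fst snd].
replace (0 + 0) with 0 by ring.
f_equal; nra.
Qed.

Definition eq_intensity (N n : nat) : R := opt_ratio (coef_sum (N - n)).

Lemma eq_intensity_last N : eq_intensity N N = 1.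
Proof.
unfold eq_intensity, coef_sum; rewrite Nat.sub_diag; cbn [coefs fst snd].
replace (0 + 0) with 0 by ring.
destruct (opt_sin_cos_spec 0) as (Hw & Ht & Htw & HSw); [lra |].
assert (Hsc : opt_sin 0 = opt_cos 0) by nra.
unfold opt_ratio; rewrite Hsc; field; lra.
Qed.

Lemma eq_intensity_pos N n : 0 < eq_intensity N n.
Proof.
unfold eq_intensity, opt_ratio.
destruct (opt_sin_cos_spec (coef_sum (N - n))) as (Hw & Ht & _ & _);
  [apply coef_sum_nonneg |].
apply Rdiv_lt_0_compat; lra.
Qed.

Definition eq_strategy (N : nat) (r : R) : nat -> R -> R :=
  fun n Sig => eq_intensity N n * r / sqrt Sig.

Lemma back_step_eq_strategy r Sig A B : 0 < r -> 0 < Sig -> 0 <= A -> 0 <= B ->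
  back_step (r ^ 2) (opt_ratio (A + B) * r / sqrt Sig) Sig
    (B * r / sqrt (sig_next (r ^ 2) (opt_ratio (A + B) * r / sqrt Sig) Sig),
     A * r * sqrt (sig_next (r ^ 2) (opt_ratio (A + B) * r / sqrt Sig) Sig))
  = (snd (coef_step (A, B)) * r / sqrt Sig, fst (coef_step (A, B)) * r * sqrt Sig).
Proof.
intros Hr HSig HA HB.
assert (HX : 0 < sqrt Sig) by (apply sqrt_lt_R0; lra).
assert (HSX : Sig = sqrt Sig ^ 2) by (symmetry; apply pow2_sqrt; lra).
set (X := sqrt Sig) in *; clearbody X; subst Sig.
destruct (opt_sin_cos_spec (A + B)) as (Hw & Ht & _ & _); [lra |].
destruct (opt_ratio_norm (A + B)) as [Hn _]; [lra |].
assert (HY2 : (1 / opt_cos (A + B)) ^ 2 = 1 + opt_ratio (A + B) ^ 2)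
  by (rewrite <- Hn; apply pow2_sqrt; nra).
rewrite (back_step_normalized r X _ (1 / opt_cos (A + B)) A B); auto;
  [| apply Rdiv_lt_0_compat; lra].
unfold coef_step, opt_ratio; cbn [fst snd].
f_equal; field; lra.
Qed.

Lemma cont_eq_strategy N r : 0 < r ->
  forall k n, (n + k = N)%nat -> forall Sig, 0 < Sig ->
  cont (eq_strategy N r) (r ^ 2) (S n) k Sig
  = (snd (coefs k) * r / sqrt Sig, fst (coefs k) * r * sqrt Sig).
Proof.
intros Hr k; induction k as [| k IH]; intros n Hn Sig HSig.
- assert (HX : 0 < sqrt Sig) by (apply sqrt_lt_R0; lra).
  cbn [cont coefs fst snd]; f_equal; field; lra.
- cbn [cont coefs].
  rewrite IH; [| lia | apply sig_next_pos; nra].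
  destruct (coefs_nonneg k) as [HA HB].
  unfold eq_strategy, eq_intensity, coef_sum.
  replace (N - S n)%nat with k by lia.
  destruct (coefs k) as [A B]; cbn [fst snd].
  now apply back_step_eq_strategy.
Qed.

Lemma exp_profit_eq_strategy N r n b Sig : 0 < r -> (n <= N)%nat -> 0 < Sig ->
  let q := b * sqrt Sig / r in
  let Y := sqrt (1 + q ^ 2) in
  exp_profit N (eq_strategy N r) (r ^ 2) n b Sig
  = r * sqrt Sig * (coef_sum (N - n) * (1 / Y) + (q / Y) * (1 / Y)).
Proof.
intros Hr Hn HSig q Y.
unfold exp_profit, dev_coef.
rewrite (cont_eq_strategy N r Hr (N - n) n ltac:(lia)); [| apply sig_next_pos; nra].
assert (HX : 0 < sqrt Sig) by (apply sqrt_lt_R0; lra).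
assert (HSX : Sig = sqrt Sig ^ 2) by (symmetry; apply pow2_sqrt; lra).
unfold Y, q; set (X := sqrt Sig) in *; clearbody X; subst Sig.
replace b with ((b * X / r) * r / X) by (field; lra).
replace (b * X / r * r / X * X / r) with (b * X / r) by (field; lra).
apply back_step_profit; auto.
Qed.

Lemma eq_strategy_SPE N r : 0 < r -> SPE N (r ^ 2) (eq_strategy N r).
Proof.
intros Hr n Hn Sig HSig b.
assert (HX : 0 < sqrt Sig) by (apply sqrt_lt_R0; lra).
rewrite !exp_profit_eq_strategy by (auto; lia).
set (S := coef_sum (N - n)); assert (HS : 0 <= S) by apply coef_sum_nonneg.
destruct (opt_sin_cos_spec S HS) as (Hw & Ht & _ & _).
destruct (opt_ratio_norm S HS) as [Hn1 _].
replace (eq_strategy N r n Sig * sqrt Sig / r) with (opt_ratio S)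
  by (unfold eq_strategy, eq_intensity; fold S; field; lra).
rewrite Hn1.
replace (1 / (1 / opt_cos S)) with (opt_cos S) by (field; lra).
replace (opt_ratio S / (1 / opt_cos S)) with (opt_sin S) by (unfold opt_ratio; field; lra).
set (q := b * sqrt Sig / r).
assert (HY : 0 < sqrt (1 + q ^ 2)) by (apply sqrt_lt_R0; nra).
assert (HY2 : sqrt (1 + q ^ 2) ^ 2 = 1 + q ^ 2) by (apply pow2_sqrt; nra).
apply Rmult_le_compat_l; [nra |].
apply opt_sin_cos_max; auto.
- apply Rlt_le, Rdiv_lt_0_compat; lra.
- transitivity ((1 + q ^ 2) / sqrt (1 + q ^ 2) ^ 2); [field; lra |].
  rewrite HY2; field; nra.
Qed.

Theorem theorem3 (N : nat) (sigma_u Sigma0 : R) :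
  (1 <= N)%nat -> 0 < sigma_u -> 0 < Sigma0 ->
  let dt := / INR N in
  let sd := sigma_u ^ 2 * dt in
  exists s : nat -> R -> R,
    SPE N sd s /\
    exists a b c : nat -> R,
      a (N - 1)%nat = 0 /\ b (N - 1)%nat = 1 / 2 /\ c N = 1 /\
      (forall n : nat, (1 <= n <= N - 1)%nat ->
         a (n - 1)%nat = a n * sqrt (1 / (c n ^ 2 + 1))
                         + b n * (sqrt (1 / (c n ^ 2 + 1))) ^ 3 * c n ^ 2 /\
         b (n - 1)%nat = b n * (sqrt (1 / (c n ^ 2 + 1))) ^ 3
                         + c n / (c n ^ 2 + 1) /\
         a n + b n = (1 - c n ^ 2) / (c n * sqrt (1 + c n ^ 2))) /\
      (forall n : nat, (1 <= n <= N)%nat -> 0 < c n) /\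
      (forall n : nat, (n <= N - 1)%nat ->
         delta_path N s sd Sigma0 n
           = a n * sigma_u * sqrt dt * sqrt (sig_path s sd Sigma0 n) /\
         alpha_path N s sd Sigma0 n
           = b n * sigma_u * sqrt dt / sqrt (sig_path s sd Sigma0 n)) /\
      (forall n : nat, (1 <= n <= N)%nat ->
         beta_path s sd Sigma0 n
           = c n * sigma_u * sqrt dt / sqrt (sig_path s sd Sigma0 (n - 1)%nat)).
Proof.
intros HN Hsu HS0 dt sd.
assert (Hdt : 0 < dt) by (apply Rinv_0_lt_compat, lt_0_INR; lia).
set (r := sigma_u * sqrt dt).
assert (Hr : 0 < r) by (apply Rmult_lt_0_compat; [lra | apply sqrt_lt_R0; lra]).
assert (Hsd : sd = r ^ 2) by (unfold r, sd; rewrite Rpow_mult_distr, pow2_sqrt; lra).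
exists (eq_strategy N r); split; [rewrite Hsd; now apply eq_strategy_SPE |].
exists (fun n => fst (coefs (N - n))), (fun n => snd (coefs (N - n))), (eq_intensity N).
replace (N - (N - 1))%nat with 1%nat by lia.
rewrite coefs_1, eq_intensity_last.
split; [| split; [| split; [| split; [| split; [| split]]]]]; auto using eq_intensity_pos.
- intros n Hn; replace (N - (n - 1))%nat with (S (N - n)) by lia.
  destruct (coefs_nonneg (N - n)) as [HA HB].
  cbn [coefs]; unfold eq_intensity, coef_sum; destruct (coefs (N - n)) as [A B].
  now apply coef_step_recursion.
- intros n Hn; unfold delta_path, alpha_path; rewrite Hsd.
  rewrite (cont_eq_strategy N r Hr (N - n) n ltac:(lia)) by (apply sig_path_pos; nra).
  unfold r, Rdiv; split; cbn [fst snd]; ring.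
- intros n _; unfold beta_path, eq_strategy, eq_intensity, r, Rdiv; ring.
Qed.
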